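(* Let $\mathbf{k}$ be a field and $\Delta$ a $(d-1)$-dimensional simplicial complex with $n$ vertices and upper skips $Q_0<\dots<Q_{d-1}$. Then $$f_{d-1}(\Delta)\le\frac{d}{Q_{d-1}(\Delta)}\binom{n}{d}.$$
   Context: A simplicial complex on $[n]$ is a family of subsets closed under subsets containing all singletons; $f_i$ counts faces of size $i+1$. With $M_i=\max\{|W|:W\subseteq[n],\ \tilde H_{|W|-i-1}(\Delta[W];\mathbf{k})\ne0\}$ (maximal shifts of the minimal free resolution of the Stanley–Reisner ring), $M_1<\dots<M_{n-d}$ lie in $\{2,\dots,n\}$ and the $d$ remaining elements of $[n]$ are the upper skips $Q_0=1<Q_1<\dots<Q_{d-1}$. *)

From HB Require Import structures.
From mathcomp Require Import all_boot all_order all_algebra.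
Set Implicit Arguments. Unset Strict Implicit. Unset Printing Implicit Defensive.
Import Order.TTheory GRing.Theory Num.Theory.

Definition simplicial_complex (n : nat) (Delta : {set {set 'I_n}}) : Prop :=
  (forall s t : {set 'I_n}, s \in Delta -> t \subset s -> t \in Delta) /\
  (forall v : 'I_n, [set v] \in Delta).

(* faces of Delta of cardinality p (i.e. f_{p-1} counts these) *)
Definition faces_of_size (n : nat) (Delta : {set {set 'I_n}}) (p : nat) :=
  [set s in Delta | #|s| == p].

Definition fvec (n : nat) (Delta : {set {set 'I_n}}) (i : nat) : nat :=
  #|faces_of_size Delta i.+1|.

Definition facesW (n : nat) (Delta : {set {set 'I_n}}) (W : {set 'I_n}) (p : nat) :=
  [set s in Delta | (s \subset W) && (#|s| == p)].

(* Simplicial boundary map of Delta[W], from (augmented) chains on faces of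
   size p to chains on faces of size p-1 (row-vector convention).  For
   p = 0 it is the zero map. *)
Definition bmx (F : fieldType) (n : nat) (Delta : {set {set 'I_n}})
    (W : {set 'I_n}) (p : nat) :
    'M[F]_(#|facesW Delta W p|, #|facesW Delta W p.-1|) :=
  \matrix_(a, b)
    let s : {set 'I_n} := enum_val a in let t : {set 'I_n} := enum_val b in
    if (t \subset s) && (#|s :\: t| == 1%N)
    then ((-1) ^+ #|[set x in t | [exists y in s :\: t, (x < y)%N]]|)%R
    else 0%R.

(* H~_m(Delta[W]; F) <> 0 (reduced simplicial homology, augmented chain
   complex; the degree m >= -1 corresponds to faces of size p = m+1).
   dim H~_m = #faces_{p} - rank d_p - rank d_{p+1}. *)
Definition rhom_nonzero (F : fieldType) (n : nat) (Delta : {set {set 'I_n}})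
    (W : {set 'I_n}) (m : int) : bool :=
  (0 <= m + 1)%R &&
  let p := `|(m + 1)%R|%N in
  (\rank (bmx F Delta W p.+1) + \rank (bmx F Delta W p) < #|facesW Delta W p|)%N.

(* M_i = max { |W| : H~_{|W|-i-1}(Delta[W]; F) <> 0 }  (0 if no such W) *)
Definition Mshift (F : fieldType) (n : nat) (Delta : {set {set 'I_n}}) (i : nat) : nat :=
  \max_(W : {set 'I_n} | rhom_nonzero F Delta W (#|W|%:Z - i%:Z - 1)%R) #|W|.

Definition Qtop (F : fieldType) (n : nat) (Delta : {set {set 'I_n}}) (d : nat) : nat :=
  \max_(q < n.+1 | (0 < q)%N && [forall i : 'I_(n - d), (q : nat) != Mshift F Delta i.+1])
     (q : nat).

From HB Require Import structures.
From mathcomp Require Import all_boot all_order all_algebra.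
From mathcomp Require Import zify.
Import Order.TTheory GRing.Theory Num.Theory.
Set Implicit Arguments. Unset Strict Implicit. Unset Printing Implicit Defensive.

(* Let q = Q_{d-1}; for q <= d the bound is trivial.  Otherwise j = q - d is a
   shift index, so M_j <> q, while M_j <= j + d = q because Delta has no faces
   of size > d.  Hence H~_{d-1}(Delta[W]) = 0 for every q-set W, and since
   Delta[W] has no faces of size d+1 this says that its d-faces number at most
   rank d_d <= rank of the boundary map of the full simplex on W, which is
   C(q-1, d-1).  Summing over all q-sets W, in C(n-d, q-d) of which each d-face
   lies, gives f_{d-1} C(n-d, q-d) <= C(n, q) C(q-1, d-1), i.e. the claim. *)

Section BoundaryCoefficients.
Variables (F : fieldType) (n : nat).
Local Open Scope ring_scope.
Implicit Types (s t u : {set 'I_n}) (x : 'I_n).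

Definition bcoef s t : F :=
  if (t \subset s) && (#|s :\: t| == 1%N)
  then (-1) ^+ #|[set x in t | [exists y in s :\: t, (x < y)%N]]| else 0.

Lemma bmxE (D : {set {set 'I_n}}) W p a b :
  bmx F D W p a b = bcoef (enum_val a) (enum_val b).
Proof. by rewrite mxE. Qed.

Definition nbelow t x := #|[set y in t | (y < x)%N]|.

Lemma bcoef_setD1 s x : x \in s -> bcoef s (s :\ x) = (-1) ^+ nbelow (s :\ x) x.
Proof.
move=> xs; rewrite /bcoef subD1set.
have -> : s :\: (s :\ x) = [set x].
  by rewrite setDDr setDv set0U; apply/setIidPr; rewrite sub1set.
rewrite cards1 /=; congr (_ ^+ _); apply: eq_card => y; rewrite !inE.
congr (_ && _); apply/existsP/idP => [[z]|yx]; first by rewrite !inE => /andP[/eqP->].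
by exists x; rewrite !inE eqxx.
Qed.

Lemma bcoef_neq0 s t : bcoef s t != 0 -> exists2 x, x \in s & t = s :\ x.
Proof.
rewrite /bcoef; case: ifP => [/andP[ts /cards1P[x sx]] _|_]; last by rewrite eqxx.
have /setDP[xs _] : x \in s :\: t by rewrite sx set11.
by exists x; rewrite // -sx setDDr setDv set0U; apply/esym/setIidPr.
Qed.

Lemma bcoef_mul_neq0 s t u : bcoef s t * bcoef t u != 0 ->
  u \subset t /\ exists2 x, x \in s & t = s :\ x.
Proof.
rewrite mulf_eq0 negb_or => /andP[/bcoef_neq0 st /bcoef_neq0[y _ ->]].
by split; first exact: subD1set.
Qed.

(* The two ways of deleting [a < b] from [s] pick up opposite signs:
   deleting [b] first shifts the position of [b] past [a]. *)
Lemma bcoef_setD1_anticomm s a b : a \in s -> b \in s -> (a < b)%N ->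
  bcoef s (s :\ a) * bcoef (s :\ a) (s :\ a :\ b)
  + bcoef s (s :\ b) * bcoef (s :\ b) (s :\ b :\ a) = 0.
Proof.
move=> as_ bs lab; have ab : a != b by apply: contraTneq lab => ->; rewrite ltnn.
have ab' : a \in s :\ b by rewrite !inE ab.
have ba' : b \in s :\ a by rewrite !inE eq_sym ab.
have sab : s :\ b :\ a = s :\ a :\ b by rewrite !setDDl setUC.
rewrite !bcoef_setD1 // sab.
have -> : nbelow (s :\ a) a = nbelow (s :\ a :\ b) a.
  apply: eq_card => y; rewrite !inE; case: (ltnP y a) => ya; rewrite ?andbF //.
  by have -> : y != b by apply: contraTneq ya => ->; rewrite -leqNgt ltnW.
have -> : nbelow (s :\ b) b = (nbelow (s :\ a :\ b) b).+1.
  rewrite /nbelow (cardsD1 a) !inE ab as_ lab add1n; congr _.+1.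
  by apply: eq_card => y; rewrite !inE; case: (y == a); case: (y == b).
by rewrite exprS mulN1r mulNr mulrC addrN.
Qed.

Lemma bcoef_comp_sum s u p : #|s| = p.+2 -> #|u| = p ->
  \sum_t bcoef s t * bcoef t u = 0.
Proof.
move=> cs cu.
have [us|nus] := boolP (u \subset s); last first.
  apply: big1 => t _; apply/eqP; apply: contraNT nus.
  by move=> /bcoef_mul_neq0[ut [x _ et]]; rewrite (subset_trans ut) // et subD1set.
have /cards2P[a [b [ab sab]]] : #|s :\: u| == 2.
  by rewrite cardsD (setIidPr us) cs cu -addn2 addKn.
wlog lab : a b ab sab / (a < b)%N.
  move=> IH; case: (ltngtP a b) => [|lba|/val_inj eab]; first exact: IH.
  - by apply: (IH b a); rewrite 1?eq_sym // sab setUC.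
  - by rewrite eab eqxx in ab.
have /setDP[as_ _] : a \in s :\: u by rewrite sab !inE eqxx.
have /setDP[bs _] : b \in s :\: u by rewrite sab !inE eqxx orbT.
have ua : u = s :\ a :\ b.
  by rewrite setDDl -sab setDDr setDv set0U; apply/esym/setIidPr.
have sab_neq : s :\ a != s :\ b.
  by apply: contraNneq ab => e; move: (setD11 b s); rewrite -e !inE bs andbT eq_sym => /negbFE.
have ub : u = s :\ b :\ a by rewrite ua !setDDl setUC.
rewrite (bigD1 (s :\ a)) // (bigD1 (s :\ b)) 1?eq_sym //= big1 ?addr0 => [|t /andP[ta tb]].
  by rewrite {1}ua ub bcoef_setD1_anticomm.
apply/eqP; apply: contraNT (ta) => /bcoef_mul_neq0[ut [x xs et]].
have : x \in s :\: u by rewrite inE xs andbT; apply/negP => /(subsetP ut); rewrite et setD11.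
by rewrite sab !inE et => /orP[]/eqP ex; [rewrite ex | rewrite et ex eqxx in tb].
Qed.

End BoundaryCoefficients.

Section BoundaryRanks.
Variables (F : fieldType) (n : nat).
Local Open Scope ring_scope.
Local Notation simplex := [set: {set 'I_n}].
Implicit Types (D : {set {set 'I_n}}) (W : {set 'I_n}).

Lemma in_facesW D W p s :
  (s \in facesW D W p) = [&& s \in D, s \subset W & #|s| == p].
Proof. by rewrite inE. Qed.

Lemma card_facesW_simplex W p : #|facesW simplex W p| = 'C(#|W|, p).
Proof. by rewrite -cards_draws; apply: eq_card => s; rewrite !inE. Qed.

Lemma bmx_simplex_mul0 W p : bmx F simplex W p.+2 *m bmx F simplex W p.+1 = 0.
Proof.
apply/matrixP => a c; rewrite !mxE.
under eq_bigr => j _ do rewrite !bmxE.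
have := enum_valP a; rewrite in_facesW => /and3P[_ sW /eqP cs].
have := enum_valP c; rewrite in_facesW => /and3P[_ _ /eqP cu].
set s := enum_val a; set u := enum_val c.
rewrite -(big_enum_val (A := mem (facesW simplex W p.+1)) (fun t => bcoef F s t * bcoef F t u)).
rewrite -[RHS](bcoef_comp_sum F cs cu) [RHS](bigID (mem (facesW simplex W p.+1))) /=.
rewrite [X in _ = _ + X]big1 ?addr0 // => t tW; apply/eqP; apply: contraNT tW.
move=> /bcoef_mul_neq0[_ [x xs ->]]; rewrite in_facesW inE (subset_trans (subD1set _ _) sW).
by move: cs; rewrite (cardsD1 x s) xs add1n -/s => -[->]; rewrite eqxx.
Qed.

Lemma mxrank_rowsub_colsub_le m k m' k' (f : 'I_m' -> 'I_m) (g : 'I_k' -> 'I_k)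
    (A : 'M[F]_(m, k)) :
  (\rank (rowsub f (colsub g A)) <= \rank A)%N.
Proof.
apply: leq_trans (mxrankS (rowsub_sub _ _)) _.
by rewrite -[A in colsub _ A]mulmx1 -mulmx_colsub mxrankM_maxl.
Qed.

Lemma mxrank_bmx_le_simplex D W p :
  (\rank (bmx F D W p) <= \rank (bmx F simplex W p))%N.
Proof.
have inS q (a : 'I_#|facesW D W q|) : enum_val a \in facesW simplex W q.
  by have := enum_valP a; rewrite !in_facesW inE => /and3P[_ -> ->].
pose f a := enum_rank_in (inS p a) (enum_val a).
pose g b := enum_rank_in (inS p.-1 b) (enum_val b).
suff -> : bmx F D W p = rowsub f (colsub g (bmx F simplex W p)).
  exact: mxrank_rowsub_colsub_le.
by apply/matrixP => a b; rewrite !mxE /f /g !enum_rankK_in.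
Qed.

(* The faces [w |: t] with [t] in [W :\ w] form a cone with apex [w]; in the
   block of rows [w |: t] and columns [t] the boundary matrix is a signed
   identity, hence invertible. *)
Lemma mxrank_bmx_simplex_ge W p w : w \in W ->
  ('C(#|W|.-1, p) <= \rank (bmx F simplex W p.+1))%N.
Proof.
move=> wW; set R := facesW simplex (W :\ w) p.
have cR : #|R| = 'C(#|W|.-1, p) by rewrite card_facesW_simplex (cardsD1 w W) wW.
pose t i := enum_val (A := mem R) i.
have tP i : [/\ t i \subset W, w \notin t i & #|t i| = p].
  have := enum_valP i; rewrite in_facesW => /and3P[_ sW /eqP ->]; split=> //.
    exact: subset_trans sW (subD1set _ _).
  by apply/negP => /(subsetP sW); rewrite setD11.
have col i : t i \in facesW simplex W p.
  by have [tW _ ct] := tP i; rewrite in_facesW inE tW ct eqxx.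
have row i : w |: t i \in facesW simplex W p.+1.
  have [tW wt ct] := tP i.
  by rewrite in_facesW inE subUset sub1set wW tW cardsU1 wt ct eqxx.
pose S := rowsub (fun i => enum_rank_in (row i) (w |: t i))
                 (colsub (fun j => enum_rank_in (col j) (t j)) (bmx F simplex W p.+1)).
have SE i j : S i j = bcoef F (w |: t i) (t j) by rewrite !mxE !enum_rankK_in.
have S0 i j : i != j -> S i j = 0.
  move=> ij; rewrite SE; apply/eqP; apply: contraNT ij => /bcoef_neq0[x _ e].
  have [_ wj _] := tP j; have [_ wi _] := tP i.
  have [xw|xw] := eqVneq x w.
    by apply/eqP/enum_val_inj; rewrite -/(t i) -/(t j) e xw setU1K.
  by rewrite e !inE eqxx orTb andbT eq_sym xw in wj.
have S2 : S *m S = 1%:M.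
  apply/matrixP => i j; rewrite !mxE (bigD1 i) //= big1 ?addr0 => [|k ki]; last first.
    by rewrite S0 ?mul0r // eq_sym.
  have [<-|ij] := eqVneq i j; last by rewrite (S0 _ _ ij) mulr0.
  have [_ wi _] := tP i.
  by rewrite SE -{2 4}(setU1K wi) bcoef_setD1 ?setU11 // -exprMn mulrNN mulr1 expr1n.
rewrite -cR -(mxrank_unit (proj1 (mulmx1_unit S2))).
exact: mxrank_rowsub_colsub_le.
Qed.

Lemma mxrank_bmx_le D W p : (0 < p)%N -> (0 < #|W|)%N ->
  (\rank (bmx F D W p) <= 'C(#|W|.-1, p.-1))%N.
Proof.
move=> p_gt0 /card_gt0P[w wW]; apply: leq_trans (mxrank_bmx_le_simplex D W p) _.
case: p p_gt0 => [//|[|p]] _.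
  by apply: leq_trans (rank_leq_col _) _; rewrite card_facesW_simplex /= !bin0.
(* rank d_{p+2} <= nullity of d_{p+1} <= C(|W|, p+1) - C(|W|-1, p) = C(|W|-1, p+1) *)
have /sub_kermxP/mxrankS := bmx_simplex_mul0 W p; rewrite mxrank_ker => rk.
apply: leq_trans rk _.
have := mxrank_bmx_simplex_ge p wW; have := card_facesW_simplex W p.+1.
set r := \rank (bmx F simplex W p.+1); set c := #|facesW simplex W p.+1|.
rewrite (cardsD1 w W) wW add1n /= binS; lia.
Qed.

End BoundaryRanks.

Lemma card_set_sum_nat (T : finType) (P Q : pred T) :
  #|[set x | P x & Q x]| = \sum_(x | P x) Q x.
Proof.
rewrite -sum1dep_card big_mkcondr /=; apply: eq_bigr => x _.
by case: (Q x).
Qed.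

Section SubsetCounting.
Variable T : finType.

Lemma card_supsets (s : {set T}) q : (#|s| <= q)%N ->
  #|[set W : {set T} | #|W| == q & s \subset W]| = 'C(#|T| - #|s|, q - #|s|).
Proof.
move=> sq; have -> : #|T| - #|s| = #|~: s| by rewrite -(cardsC s) addKn.
rewrite -cards_draws.
have unionK (B : {set T}) : B \subset ~: s -> (s :|: B) :\: s = B.
  by move=> Bs; rewrite setDUl setDv set0U; apply/setDidPl; rewrite disjoints_subset.
rewrite -[RHS](card_in_imset (f := fun B => s :|: B)); last first.
  move=> B1 B2; rewrite !inE => /andP[/(unionK _) h1 _] /andP[/(unionK _) h2 _] e.
  by rewrite -h1 e h2.
apply: eq_card => W; rewrite !inE; apply/andP/imsetP => [[/eqP cW sW]|[B]].
  exists (W :\: s); last by rewrite -{1}(setID W s) (setIidPr sW).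
  by rewrite !inE setDE subsetIr /= -setDE cardsD (setIidPr sW) cW.
rewrite !inE => /andP[Bs /eqP cB] ->; split; last exact: subsetUl.
rewrite cardsU cB (disjoint_setI0 _) ?cards0 ?subn0 ?subnKC ?eqxx //.
by rewrite disjoint_sym disjoints_subset.
Qed.

Lemma sum_card_subsets (S : {set {set T}}) d q :
  (forall s, s \in S -> #|s| = d) -> (d <= q)%N ->
  \sum_(W : {set T} | #|W| == q) #|[set s in S | s \subset W]| =
    #|S| * 'C(#|T| - d, q - d).
Proof.
move=> cS dq; under eq_bigr => W _ do rewrite card_set_sum_nat.
rewrite exchange_big /= -sum_nat_const; apply: eq_bigr => s sS.
by rewrite -card_set_sum_nat card_supsets cS.
Qed.

End SubsetCounting.

Lemma mul_bin_subset m d q : (d <= q)%N ->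
  'C(m, d) * 'C(m - d, q - d) = 'C(m, q) * 'C(q, d).
Proof.
move=> dq; set S := [set s : {set 'I_m} | #|s| == d].
have cS s : s \in S -> #|s| = d by rewrite inE => /eqP.
have := sum_card_subsets cS dq; rewrite card_draws !card_ord => <-.
rewrite -[in RHS](card_ord m) -card_draws -sum_nat_cond_const.
apply: eq_bigr => W /eqP cW; rewrite -cW -cards_draws.
by apply: eq_card => s; rewrite !inE andbC.
Qed.

Lemma bigmax_attained (I : finType) (P : pred I) (G : I -> nat) :
  (0 < \max_(i | P i) G i)%N -> exists2 i, P i & \max_(i | P i) G i = G i.
Proof.
case: (pickP P) => [i Pi _|P0]; last by rewrite big_pred0.
have [|j Pj eP] := @eq_bigmax_cond _ P G; first by apply/card_gt0P; exists i.
by exists j.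
Qed.

Section InducedHomology.
Variables (F : fieldType) (n : nat) (D : {set {set 'I_n}}).
Implicit Type W : {set 'I_n}.

Lemma rhom_nonzero_neg1 W : simplicial_complex D -> W != set0 ->
  ~~ rhom_nonzero F D W (-1).
Proof.
move=> [closedD vertD] /set0Pn[v vW]; rewrite /rhom_nonzero addNr /=.
have D0 : set0 \in D := closedD _ _ (vertD v) (sub0set _).
have e0 : set0 \in facesW D W 0 by rewrite in_facesW D0 sub0set cards0.
have e1 : [set v] \in facesW D W 1 by rewrite in_facesW sub1set vW cards1 vertD.
have c0 : #|facesW D W 0| = 1%N.
  apply/eqP/cards1P; exists set0; apply/setP => s; rewrite !inE cards_eq0.
  by apply/idP/eqP => [/and3P[_ _ /eqP]|->] //; rewrite D0 sub0set eqxx.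
rewrite [X in (_ < X)%N]c0 ltnS leqn0 addn_eq0 mxrank_eq0; apply/negP => /andP[/eqP B0 _].
have : bmx F D W 1 (enum_rank_in e1 [set v]) (enum_rank_in e0 set0) = 0%R by rewrite B0 mxE.
rewrite bmxE !enum_rankK_in // -(setDv [set v]) bcoef_setD1 ?set11 //.
by move/eqP; rewrite signr_eq0.
Qed.

Variable d : nat.
Hypothesis dimD : forall s, s \in D -> (#|s| <= d)%N.

Lemma card_facesW_gt_dim W p : (d < p)%N -> #|facesW D W p| = 0%N.
Proof.
move=> dp; apply: eq_card0 => s; rewrite in_facesW.
by apply/and3P => -[/dimD sd _ /eqP cs]; move: sd; rewrite cs leqNgt dp.
Qed.

Lemma rhom_nonzero_card_le W j :
  rhom_nonzero F D W (#|W|%:Z - j%:Z - 1) -> (#|W| <= j + d)%N.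
Proof.
move=> /andP[ge0]; have -> : (#|W|%:Z - j%:Z - 1 + 1 = (#|W| - j)%N%:Z)%R by lia.
rewrite absz_nat; have [|dlt] := leqP (#|W| - j) d; first lia.
by rewrite /= [X in (_ < X)%N]card_facesW_gt_dim.
Qed.

Lemma Mshift_le j : (Mshift F D j <= j + d)%N.
Proof. by apply/bigmax_leqP => W; apply: rhom_nonzero_card_le. Qed.

Lemma Mshift_eq W j : rhom_nonzero F D W (#|W|%:Z - j%:Z - 1) -> #|W| = (j + d)%N ->
  Mshift F D j = (j + d)%N.
Proof.
move=> hW cW; apply/eqP; rewrite eqn_leq Mshift_le -cW.
by rewrite /Mshift /=; apply: (leq_bigmax_cond (F := fun W : {set _} => #|W|)) hW.
Qed.

Lemma card_facesW_le W : (0 < d)%N -> (0 < #|W|)%N ->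
  ~~ rhom_nonzero F D W (d%:Z - 1) -> (#|facesW D W d| <= 'C(#|W|.-1, d.-1))%N.
Proof.
move=> d_gt0 W_gt0; rewrite /rhom_nonzero subrK le0z_nat absz_nat /= -leqNgt.
have -> : \rank (bmx F D W d.+1) = 0%N.
  by apply/eqP; rewrite -leqn0 (leq_trans (rank_leq_row _)) // card_facesW_gt_dim.
by move/leq_trans; apply; apply: mxrank_bmx_le.
Qed.

End InducedHomology.

Lemma Mshift_neq1 (F : fieldType) n (D : {set {set 'I_n}}) j :
  simplicial_complex D -> (0 < j)%N -> Mshift F D j != 1%N.
Proof.
move=> scD j_gt0; apply/eqP => M1.
have [|W hW] := @bigmax_attained _
  (fun W : {set 'I_n} => rhom_nonzero F D W (#|W|%:Z - j%:Z - 1)) (fun W => #|W|).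
  by rewrite -/(Mshift F D j) M1.
rewrite -/(Mshift F D j) M1 => /esym/eqP/cards1P[v Wv].
move: hW; rewrite Wv cards1.
case: j j_gt0 {M1} => [//|[|j]] _; last by move=> /andP[]; lia.
by apply/negP/rhom_nonzero_neg1 => //; apply/set0Pn; exists v; rewrite set11.
Qed.

Lemma Qtop_spec (F : fieldType) n (D : {set {set 'I_n}}) d :
  simplicial_complex D -> (0 < n)%N ->
  [/\ (0 < Qtop F D d)%N, (Qtop F D d <= n)%N &
      forall i : 'I_(n - d), Qtop F D d != Mshift F D i.+1].
Proof.
move=> scD n_gt0.
have Q_gt0 : (0 < Qtop F D d)%N.
  apply: (@leq_bigmax_cond _ _ (fun q : 'I_n.+1 => val q) (Ordinal (n_gt0 : 1 < n.+1))).
  by apply/forallP => i /=; rewrite eq_sym Mshift_neq1.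
have [q /andP[_ /forallP qM] Qq] := bigmax_attained Q_gt0.
by rewrite -/(Qtop F D d) in Qq; rewrite Qq in Q_gt0 *; split; rewrite // -ltnS ltn_ord.
Qed.

Lemma card_faces_of_size_le n (D : {set {set 'I_n}}) p :
  (#|faces_of_size D p| <= 'C(n, p))%N.
Proof.
rewrite -[n in 'C(n, _)](card_ord n) -card_draws.
by apply/subset_leq_card/subsetP => s; rewrite !inE => /andP[].
Qed.

Lemma card_faces_mul_le n (D : {set {set 'I_n}}) d q : (0 < d)%N -> (d <= q <= n)%N ->
  (forall W : {set 'I_n}, #|W| = q -> #|facesW D W d| <= 'C(q.-1, d.-1))%N ->
  (#|faces_of_size D d| * q <= d * 'C(n, d))%N.
Proof.
move=> d_gt0 /andP[dq qn] boundW.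
set f := #|faces_of_size D d|; set c := 'C(n - d, q - d).
have c_gt0 : (0 < c)%N by rewrite bin_gt0 leq_sub2r.
have f_c : (f * c <= 'C(n, q) * 'C(q.-1, d.-1))%N.
  have cS s : s \in faces_of_size D d -> #|s| = d by rewrite inE => /andP[_ /eqP].
  rewrite /c -[n in 'C(n - d, _)](card_ord n) -(sum_card_subsets cS dq).
  rewrite -[n in 'C(n, q)](card_ord n) -card_draws -sum_nat_cond_const.
  apply: leq_sum => W /eqP cW; apply: leq_trans (boundW W cW); apply/eq_leq/eq_card => s.
  by rewrite !inE -andbA [X in _ && X]andbC.
have q_bin : (q * 'C(q.-1, d.-1) = d * 'C(q, d))%N by rewrite mul_bin_diag prednK.
rewrite -(leq_pmul2r c_gt0) mulnAC; apply: leq_trans (leq_mul f_c (leqnn q)) _.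
by rewrite -!mulnA [_ * q]mulnC q_bin (mul_bin_subset _ dq) mulnCA.
Qed.

Theorem lemma4p7 (F : fieldType) (n d : nat) (Delta : {set {set 'I_n}}) :
  simplicial_complex Delta ->
  (1 <= d)%N ->
  (exists2 s, s \in Delta & #|s| = d) ->
  (forall s, s \in Delta -> #|s| <= d)%N ->
  ((fvec Delta d.-1)%:R <= (d%:R / (Qtop F Delta d)%:R) * ('C(n, d))%:R :> rat)%R.
Proof.
move=> scD d_gt0 [s0 _ cs0] dimD.
have n_gt0 : (0 < n)%N by rewrite -(card_ord n) (leq_trans d_gt0) // -cs0 max_card.
have [q_gt0 qn qM] := Qtop_spec F d scD n_gt0.
set q := Qtop F Delta d in q_gt0 qn qM *.
rewrite mulrAC ler_pdivlMr ?ltr0n // -!natrM ler_nat /fvec prednK //.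
have [qd|dq] := leqP q d; first by rewrite mulnC leq_mul // card_faces_of_size_le.
apply: card_faces_mul_le => // [|W cW]; first by rewrite ltnW.
rewrite -cW; apply: card_facesW_le => //; first by rewrite cW (leq_trans d_gt0 (ltnW dq)).
have i_lt : ((q - d).-1 < n - d)%N by lia.
apply: contra (qM (Ordinal i_lt)) => hW /=; rewrite prednK ?subn_gt0 //.
have hW' : rhom_nonzero F Delta W (#|W|%:Z - (q - d)%:Z - 1).
  by rewrite cW (_ : (q%:Z - (q - d)%:Z - 1 = d%:Z - 1)%R) //; lia.
by rewrite (Mshift_eq dimD hW') subnK ?cW // ltnW.
Qed.
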